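(* Let $\mathbb{G}$ be a connected undirected graph on $m$ agents with neighbor sets $\mathcal{N}_i$. For each agent $i$, let $f_i:\mathbb{R}^n\to\mathbb{R}$, $A_i\in\mathbb{R}^{n_i\times n}$, $b_i\in\operatorname{image}A_i$, and let $P_i$ be the orthogonal projection matrix onto $\ker A_i$. Suppose each $f_i$ is convex and continuously differentiable with Lipschitz gradient; $\operatorname{rank}(\mathrm{col}\{A_1,\dots,A_m\})<n$; the set $\{x: A_ix=b_i\ \forall i\}$ is non-empty; and a (possibly non-unique) minimizer of $F(x)=\sum_{i=1}^m f_i(x)$ subject to $A_ix=b_i$ for all $i$ exists. Consider the dynamics $\dot x_i=-P_i\big(\nabla f_i(x_i)+\sum_{j\in\mathcal{N}_i}(x_i-x_j)+y_i\big)$, $\dot y_i=\sum_{j\in\mathcal{N}_i}(x_i-x_j)$, $y_i(0)=0$, $A_ix_i(0)=b_i$ (equivalent to the integral-feedback update $\dot x_i=-P_i(\nabla f_i(x_i)+\sum_{j\in\mathcal{N}_i}(x_i-x_j)+\int_0^t\sum_{j\in\mathcal{N}_i}(x_i-x_j))$). Call $(x_1^*,\dots,x_m^*,y_1^*,\dots,y_m^* )$ an equilibrium point if $A_ix_i^*=b_i$ for all $i$, $\sum_{i=1}^m y_i^*=0$, and for all $i$: $$0=-P_i\Big(\nabla f_i(x_i^* )+\sum_{j\in\mathcal{N}_i}(x_i^*-x_j^* )+y_i^*\Big),\qquad 0=\sum_{j\in\mathcal{N}_i}(x_i^*-x_j^* ).$$ Then an equilibrium point exists. Furthermore, for every equilibrium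 point there is $x^*\in\mathbb{R}^n$ with $x_i^*=x^*$ for all $i=1,\dots,m$, and $x^*$ minimizes $\sum_{i=1}^m f_i(x)$ subject to $A_ix=b_i$, $i=1,\dots,m$.
   Context: $\nabla f_i$ denotes the gradient of $f_i$. Neighbor relations are symmetric: $j\in\mathcal{N}_i$ iff $i\in\mathcal{N}_j$. The conditions $A_ix_i^*=b_i$ and $\sum_i y_i^*=0$ reflect invariants of the dynamics: $A_ix_i(t)=b_i$ for all $t$, and $y(t)$ stays in the image of the graph Laplacian (Kronecker) $L\otimes I_n$. *)

From HB Require Import structures.
From mathcomp Require Import all_boot all_order all_algebra.
From mathcomp Require Import all_classical all_reals all_analysis.
Set Implicit Arguments. Unset Strict Implicit. Unset Printing Implicit Defensive.
Import Order.TTheory GRing.Theory Num.Theory.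
Import numFieldNormedType.Exports.
Local Open Scope ring_scope.

Definition convex_fun {R : realType} {n : nat} (f : 'cV[R]_n -> R) : Prop :=
  forall (x y : 'cV[R]_n) (t : R), 0 <= t -> t <= 1 ->
    f (t *: x + (1 - t) *: y) <= t * f x + (1 - t) * f y.

Definition is_gradient {R : realType} {n : nat}
  (f : 'cV[R]_n -> R) (g : 'cV[R]_n -> 'cV[R]_n) : Prop :=
  forall x : 'cV[R]_n, differentiable f x /\
    forall h : 'cV[R]_n, 'd f x h = ((g x)^T *m h) 0 0.

(* g is Lipschitz (w.r.t. the library norm on 'cV_n; all norms on R^n are
   equivalent so this is the usual notion). *)
Definition lipschitz_map {R : realType} {n : nat} (g : 'cV[R]_n -> 'cV[R]_n) : Prop :=
  exists L : R, forall x y : 'cV[R]_n, `|g x - g y| <= L * `|x - y|.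

Definition is_orth_proj_ker {R : realType} {p n : nat}
  (A : 'M[R]_(p, n)) (P : 'M[R]_n) : Prop :=
  [/\ P^T = P, P *m P = P, A *m P = 0 &
      forall x : 'cV[R]_n, A *m x = 0 -> P *m x = x].

(* Undirected connected graph on the agents 'I_m, given by a symmetric
   irreflexive adjacency relation; N_i = [pred j | e i j]. *)
Definition undirected_connected {m : nat} (e : rel 'I_m) : Prop :=
  [/\ irreflexive e, symmetric e & forall i j, connect e i j].

Definition feasible {R : realType} {m n : nat} {ni : 'I_m -> nat}
  (A : forall i, 'M[R]_(ni i, n)) (b : forall i, 'cV[R]_(ni i))
  (x : 'cV[R]_n) : Prop :=
  forall i, A i *m x = b i.

Definition is_constrained_minimizer {R : realType} {m n : nat} {ni : 'I_m -> nat}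
  (f : 'I_m -> 'cV[R]_n -> R)
  (A : forall i, 'M[R]_(ni i, n)) (b : forall i, 'cV[R]_(ni i))
  (x : 'cV[R]_n) : Prop :=
  feasible A b x /\
  forall z, feasible A b z -> \sum_(i < m) f i x <= \sum_(i < m) f i z.

Definition is_equilibrium {R : realType} {m n : nat} {ni : 'I_m -> nat}
  (e : rel 'I_m) (g : 'I_m -> 'cV[R]_n -> 'cV[R]_n)
  (A : forall i, 'M[R]_(ni i, n)) (b : forall i, 'cV[R]_(ni i))
  (P : 'I_m -> 'M[R]_n) (x y : 'I_m -> 'cV[R]_n) : Prop :=
  [/\ forall i, A i *m x i = b i,
      \sum_(i < m) y i = 0,
      forall i, 0 = - (P i *m (g i (x i) + \sum_(j < m | e i j) (x i - x j) + y i))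
    & forall i, 0 = \sum_(j < m | e i j) (x i - x j)].

(** At a constrained minimizer [x] of [F = \sum_i f_i], the first-order
    condition says that [\sum_i grad f_i(x)] is orthogonal to the common
    kernel of the [A_i], hence lies in the span of the rows of the [A_i]:
    [\sum_i grad f_i(x) = \sum_i A_i^T l_i].  Taking every [x_i = x] and
    [y_i = A_i^T l_i - grad f_i(x)] gives an equilibrium, since [P_i]
    annihilates [A_i^T].  Conversely, [\sum_(j in N_i) (x_i - x_j) = 0] for
    all [i] forces consensus on a connected graph (maximum principle), and for
    feasible [z] the vector [z - x] lies in every [ker A_i], where [P_i] acts
    as the identity; so [\sum_i <grad f_i(x), z - x> = - \sum_i <y_i, z - x> = 0],
    and the gradient inequality for convex functions gives [F(x) <= F(z)]. *)

From HB Require Import structures.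
From mathcomp Require Import all_boot all_order all_algebra.
From mathcomp Require Import all_classical all_reals all_analysis.
From mathcomp Require Import lra.
Import Order.TTheory GRing.Theory Num.Theory.
Import numFieldNormedType.Exports.
Set Implicit Arguments. Unset Strict Implicit.
Local Open Scope ring_scope.
Local Open Scope classical_set_scope.

Definition vdot {R : pzRingType} {n : nat} (u v : 'cV[R]_n) : R := (u^T *m v) 0 0.

Lemma vdot_suml (R : pzRingType) n (I : finType) (P : pred I)
    (u : I -> 'cV[R]_n) v :
  vdot (\sum_(i | P i) u i) v = \sum_(i | P i) vdot (u i) v.
Proof. by rewrite /vdot linear_sum /= mulmx_suml summxE. Qed.

Lemma vdotDl (R : pzRingType) n (u w v : 'cV[R]_n) :
  vdot (u + w) v = vdot u v + vdot w v.
Proof. by rewrite /vdot linearD /= mulmxDl mxE. Qed.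

Lemma vdotNr (R : pzRingType) n (u v : 'cV[R]_n) : vdot u (- v) = - vdot u v.
Proof. by rewrite /vdot mulmxN mxE. Qed.

Lemma vdot0l (R : pzRingType) n (v : 'cV[R]_n) : vdot 0 v = 0.
Proof. by rewrite /vdot trmx0 mul0mx mxE. Qed.

Section OneSidedLimits.
Variable R : realFieldType.

Lemma cvg_right0_le (phi : R -> R) (l c : R) : phi @ 0^'+ --> l ->
  (forall t, 0 < t -> t < 1 -> phi t <= c) -> l <= c.
Proof.
move=> cv phi_le; apply: (closed_cvg _ (@closed_le _ c) _ _ cv).
near=> t; apply: phi_le.
- by near: t; exact: nbhs_right_gt.
- by near: t; exact: nbhs_right_lt.
Unshelve. all: by end_near.
Qed.

Lemma cvg_right0_ge (phi : R -> R) (l c : R) : phi @ 0^'+ --> l ->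
  (forall t, 0 < t -> t < 1 -> c <= phi t) -> c <= l.
Proof.
move=> /cvgN cv ge_phi; rewrite -lerN2; apply: (cvg_right0_le cv) => t t0 t1.
by rewrite lerN2; exact: ge_phi.
Qed.

End OneSidedLimits.

Section Gradient.
Variables (R : realType) (n : nat).

Lemma gradient_quotient_cvg (f : 'cV[R]_n -> R) g x d : is_gradient f g ->
  (fun t : R => t^-1 * (f (t *: d + x) - f x)) @ 0^'+ --> vdot (g x) d.
Proof.
move=> /(_ x) [dif dfE].
have := @diff_derivable _ _ _ _ _ d dif; rewrite /derivable => cv.
rewrite /vdot -dfE -deriveE // /derive.
move=> U /cv /nbhs_ballP [r r0 rU].
apply/nbhs_ballP; exists r => // t rt t0.
by apply: rU => //; rewrite gt_eqF.
Qed.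

Lemma convex_gradient_ineq (f : 'cV[R]_n -> R) g x z :
  convex_fun f -> is_gradient f g -> f x + vdot (g x) (z - x) <= f z.
Proof.
move=> fcvx fgrad; rewrite addrC -lerBrDr.
apply: (cvg_right0_le (gradient_quotient_cvg (x:=x) (d:=z - x) fgrad)) => t t0 t1.
rewrite ler_pdivrMl // lerBlDr.
have -> : t *: (z - x) + x = t *: z + (1 - t) *: x.
  by rewrite scalerBr scalerBl scale1r addrC addrCA addrA.
apply: le_trans (fcvx z x t (ltW t0) (ltW t1)) _.
rewrite mulrBr mulrBl mul1r; lra.
Qed.

Lemma sum_gradient_vdot_ge0 (I : finType) (f : I -> 'cV[R]_n -> R) g x d :
  (forall i, is_gradient (f i) (g i)) ->
  (forall t, 0 < t -> \sum_i f i x <= \sum_i f i (t *: d + x)) ->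
  0 <= vdot (\sum_i g i x) d.
Proof.
move=> fgrad xmin; rewrite vdot_suml.
apply: (@cvg_right0_ge _ (fun t => \sum_i t^-1 * (f i (t *: d + x) - f i x))).
  apply: (@cvg_big _ _ +%R 0 predT add_continuous) => // i _.
  exact: gradient_quotient_cvg.
move=> t t0 _; rewrite -mulr_sumr sumrB.
apply: mulr_ge0; first by rewrite invr_ge0 ltW.
by rewrite subr_ge0 xmin.
Qed.

End Gradient.

Section Projection.
Variables (R : realType) (p n : nat) (A : 'M[R]_(p, n)) (P : 'M[R]_n).
Hypothesis PA : is_orth_proj_ker A P.

Lemma orth_proj_ker_mul_tr : P *m A^T = 0.
Proof. by case: PA => Psym _ AP _; rewrite -Psym -trmx_mul AP trmx0. Qed.

Lemma orth_proj_ker_vdot u v : A *m v = 0 -> vdot u v = vdot (P *m u) v.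
Proof. by case: PA => Psym _ _ Pker Av; rewrite /vdot trmx_mul Psym -mulmxA Pker. Qed.

End Projection.

Section RowSpace.
Variables (F : fieldType) (m n : nat) (ni : 'I_m -> nat).
Variable A : forall i, 'M[F]_(ni i, n).

Lemma mxcol_mul_eq0 q (d : 'M[F]_(n, q)) :
  \mxcol_i A i *m d = 0 -> forall i, A i *m d = 0.
Proof.
move=> Md i; have := congr1 (fun M => submxcol M i) Md.
by rewrite /= -submxcol_mul mxcolK submxcol0.
Qed.

Lemma orthogonal_ker_submx p (M : 'M[F]_(p, n)) (u : 'cV[F]_n) :
  (forall d, M *m d = 0 -> vdot u d = 0) -> (u^T <= M)%MS.
Proof.
move=> u_orth; rewrite submxE; apply/eqP/matrixP => r k.
rewrite [r]ord1 [RHS]mxE.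
have Mk : M *m col k (cokermx M) = 0 by rewrite colE mulmxA mulmx_coker mul0mx.
by have := u_orth _ Mk; rewrite /vdot colE mulmxA -colE mxE => ->.
Qed.

Lemma submx_mxcolP (v : 'rV[F]_n) : (v <= \mxcol_i A i)%MS ->
  exists l : forall i, 'rV[F]_(ni i), v = \sum_i l i *m A i.
Proof.
case/submxP => D ->; exists (submxrow D).
by rewrite -{1}[D]submxrowK mul_mxrow_mxcol.
Qed.

End RowSpace.

Section Consensus.
Variables (R : realDomainType) (T : finType) (e : rel T).
Hypothesis e_connected : forall i j, connect e i j.

Lemma laplacian_eq0_const (F : T -> R) :
  (forall i, \sum_(j | e i j) (F i - F j) = 0) -> forall i j, F i = F j.
Proof.
move=> lapF i j.
case: (@arg_maxP _ _ _ i predT F isT) => i0 _ F_le.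
have maxE a b : F a = F i0 -> e a b -> F b = F i0.
  move=> Fa eab; have /psumr_eq0P Fab := lapF a.
  apply/eqP; rewrite -Fa eq_sym -subr_eq0; apply/eqP/Fab => // c _.
  by rewrite subr_ge0 Fa; exact: F_le.
have path_max s a : path e a s -> F a = F i0 -> F (last a s) = F i0.
  elim: s a => //= c s IH a /andP [eac es] Fa.
  exact/IH/(maxE a).
have all_max a : F a = F i0.
  by have /connectP [s es ->] := e_connected i0 a; apply: path_max.
by rewrite !all_max.
Qed.

Lemma laplacian_eq0_consensus p q (x : T -> 'M[R]_(p, q)) :
  (forall i, \sum_(j | e i j) (x i - x j) = 0) -> forall i j, x i = x j.
Proof.
move=> lapx i j; apply/matrixP => r c.
apply: (@laplacian_eq0_const (fun a => x a r c)) => a.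
transitivity ((\sum_(k | e a k) (x a - x k)) r c); last by rewrite lapx mxE.
by rewrite summxE; under [RHS]eq_bigr do rewrite !mxE.
Qed.

End Consensus.

Section Equilibrium.
Variables (R : realType) (m n : nat) (e : rel 'I_m) (ni : 'I_m -> nat).
Variables (f : 'I_m -> 'cV[R]_n -> R) (g : 'I_m -> 'cV[R]_n -> 'cV[R]_n).
Variables (A : forall i, 'M[R]_(ni i, n)) (b : forall i, 'cV[R]_(ni i)).
Variable P : 'I_m -> 'M[R]_n.
Hypothesis P_proj : forall i, is_orth_proj_ker (A i) (P i).
Hypothesis f_grad : forall i, is_gradient (f i) (g i).

Lemma minimizer_lagrange_multipliers xm : is_constrained_minimizer f A b xm ->
  exists l : forall i, 'rV[R]_(ni i), \sum_i g i xm = \sum_i (l i *m A i)^T.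
Proof.
case=> xm_feas xm_min.
have G_ker d : \mxcol_i A i *m d = 0 -> vdot (\sum_i g i xm) d = 0.
  move=> /mxcol_mul_eq0 Ad.
  have ge0 s : (forall i, A i *m s = 0) -> 0 <= vdot (\sum_i g i xm) s.
    move=> As; apply: sum_gradient_vdot_ge0 => // t _; apply: xm_min => i.
    by rewrite mulmxDr -scalemxAr As scaler0 add0r xm_feas.
  apply/eqP; rewrite eq_le ge0 // -oppr_ge0 -vdotNr ge0 // => i.
  by rewrite mulmxN Ad oppr0.
have [l Gl] := submx_mxcolP (orthogonal_ker_submx G_ker).
by exists l; rewrite -[LHS]trmxK Gl linear_sum.
Qed.

Lemma equilibrium_of_minimizer xm : is_constrained_minimizer f A b xm ->
  exists x y, is_equilibrium e g A b P x y.
Proof.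
move=> xm_min; have [l Gl] := minimizer_lagrange_multipliers xm_min.
have no_disagreement i : \sum_(j < m | e i j) (xm - xm) = 0.
  by rewrite big1 // => j _; rewrite subrr.
exists (fun=> xm), (fun i => (l i *m A i)^T - g i xm); split => //.
- by case: xm_min.
- by rewrite sumrB -Gl subrr.
- move=> i; rewrite no_disagreement addr0 addrC subrK.
  by rewrite trmx_mul mulmxA orth_proj_ker_mul_tr // mul0mx oppr0.
Qed.

Lemma minimizer_of_equilibrium x y xs : (forall i, convex_fun (f i)) ->
  is_equilibrium e g A b P x y -> (forall i, x i = xs) ->
  is_constrained_minimizer f A b xs.
Proof.
move=> f_cvx [Ax Sy Px _] x_xs.
have xs_feas : feasible A b xs by move=> i; rewrite -(x_xs i) Ax.
split=> // z z_feas.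
have ker_dir i : A i *m (z - xs) = 0 by rewrite mulmxBr z_feas xs_feas subrr.
have Pgy i : P i *m (g i xs + y i) = 0.
  have := Px i; rewrite big1 => [|j _]; last by rewrite !x_xs subrr.
  by rewrite addr0 x_xs => /esym /eqP; rewrite oppr_eq0 => /eqP.
have grad_orth : \sum_i vdot (g i xs) (z - xs) = 0.
  have : \sum_i vdot (g i xs + y i) (z - xs) = 0.
    apply: big1 => i _.
    by rewrite (orth_proj_ker_vdot (P_proj i) _ (ker_dir i)) Pgy vdot0l.
  under eq_bigr do rewrite vdotDl.
  by rewrite big_split /= -[X in _ + X]vdot_suml Sy vdot0l addr0.
rewrite -[leLHS]addr0 -[X in _ + X]grad_orth -big_split /=.
by apply: ler_sum => i _; exact: convex_gradient_ineq.
Qed.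

End Equilibrium.

Theorem lemma1 (R : realType) (m n : nat) (e : rel 'I_m)
  (ni : 'I_m -> nat)
  (f : 'I_m -> 'cV[R]_n -> R) (g : 'I_m -> 'cV[R]_n -> 'cV[R]_n)
  (A : forall i : 'I_m, 'M[R]_(ni i, n)) (b : forall i : 'I_m, 'cV[R]_(ni i))
  (P : 'I_m -> 'M[R]_n) :
  undirected_connected e ->
  (forall i, exists z : 'cV[R]_n, A i *m z = b i) ->
  (forall i, is_orth_proj_ker (A i) (P i)) ->
  (forall i, convex_fun (f i)) ->
  (forall i, is_gradient (f i) (g i)) ->
  (forall i, continuous (g i)) ->
  (forall i, lipschitz_map (g i)) ->
  (\rank (\mxcol_(i < m) A i) < n)%N ->
  (exists x : 'cV[R]_n, feasible A b x) ->
  (exists x : 'cV[R]_n, is_constrained_minimizer f A b x) ->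
  (exists x y : 'I_m -> 'cV[R]_n, is_equilibrium e g A b P x y) /\
  (forall x y : 'I_m -> 'cV[R]_n, is_equilibrium e g A b P x y ->
     exists xs : 'cV[R]_n,
       (forall i, x i = xs) /\ is_constrained_minimizer f A b xs).
Proof.
(* Only the existence of a minimizer is used: the rank condition and the
   regularity of the gradients matter for the convergence of the dynamics,
   and the feasibility assumptions follow from the minimizer. *)
move=> [_ _ e_conn] _ P_proj f_cvx f_grad _ _ _ _ [xm xm_min].
split; first exact: (equilibrium_of_minimizer e P_proj f_grad xm_min).
move=> x y xy_eq.
have [xs x_xs] : exists xs, forall i, x i = xs.
  case: (pickP (@predT 'I_m)) => [i0 _|no_agent]; [exists (x i0) | exists 0] => i.
    by case: xy_eq => _ _ _ lap; apply: laplacian_eq0_consensus => // k; rewrite -lap.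
  by have := no_agent i.
exists xs; split => //.
exact: (minimizer_of_equilibrium P_proj f_grad f_cvx xy_eq x_xs).
Qed.
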